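(* Let $A \in \mathfrak t$, let $\Phi_{\mathfrak h} = \{\alpha \in \Phi_{\mathfrak g} : \alpha(A) = 0\}$, let $U = \bigcap_{\alpha \in \Phi_{\mathfrak h}} \ker(\alpha) \subseteq \mathfrak t$ (with $U = \mathfrak t$ if $\Phi_{\mathfrak h} = \varnothing$), and let $$\mathbf B = U \cap \bigcap_{\alpha \in \Phi_{\mathfrak g} \setminus \Phi_{\mathfrak h}} \bigl(\mathfrak t \setminus \ker(\alpha)\bigr) \subseteq \mathfrak t .$$ Then $\operatorname{Stab}_{W_{\mathfrak g}}(U) = \operatorname{Stab}_{W_{\mathfrak g}}(\mathbf B)$, and $(W_{\mathfrak g} A) \cap \mathbf B = \mathcal O_A$, where $\mathcal O_A$ is the orbit of $A$ under the group $\operatorname{Stab}_{W_{\mathfrak g}}(\mathbf B)$.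
   Context: $G$ is a connected complex reductive Lie group, $\mathfrak g = \mathrm{Lie}(G)$, $T \subseteq G$ a maximal torus, $\mathfrak t = \mathrm{Lie}(T)$, $\Phi_{\mathfrak g} \subseteq \mathfrak t^\vee$ the root system of $(\mathfrak g,\mathfrak t)$, and $W_{\mathfrak g} = N_G(T)/T$ the Weyl group, acting on $\mathfrak t$. For a subset $S \subseteq \mathfrak t$, the setwise stabiliser is $\operatorname{Stab}_{W_{\mathfrak g}}(S) = \{w \in W_{\mathfrak g} : w(S) \subseteq S\}$. *)

From HB Require Import structures.
From mathcomp Require Import all_boot all_order all_algebra.
Set Implicit Arguments. Unset Strict Implicit. Unset Printing Implicit Defensive.
Import Order.TTheory GRing.Theory Num.Theory.
Local Open Scope ring_scope.

(* Model: t = 'cV[F]_n (Cartan subalgebra, dim n), t^vee = 'rV[F]_n,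
   roots alpha : 'rV_n, coroots cor alpha : 'cV_n, pairing alpha(X) = (alpha *m X) 0 0.
   Weyl group = group generated by the root reflections s_alpha(X) = X - alpha(X) alpha^vee. *)

Section Defs.
Variables (F : numClosedFieldType) (n : nat).

Definition ev (a : 'rV[F]_n) (X : 'cV[F]_n) : F := (a *m X) 0 0.

Definition is_root_datum (Phi : seq 'rV[F]_n) (cor : 'rV[F]_n -> 'cV[F]_n) : Prop :=
  [/\ forall a, a \in Phi -> ev a (cor a) = 2,
      forall a b, a \in Phi -> b \in Phi -> b - ev b (cor a) *: a \in Phi &
      forall a b, a \in Phi -> b \in Phi ->
        cor (b - ev b (cor a) *: a) = cor b - ev a (cor b) *: cor a].

Definition refl (a : 'rV[F]_n) (c : 'cV[F]_n) : 'M[F]_n := 1%:M - c *m a.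

Definition weyl (Phi : seq 'rV[F]_n) (cor : 'rV[F]_n -> 'cV[F]_n) (w : 'M[F]_n) : Prop :=
  exists s : seq 'rV[F]_n, all (mem Phi) s /\
    w = foldr (fun a m => refl a (cor a) *m m) 1%:M s.

Definition stab (W : 'M[F]_n -> Prop) (S : 'cV[F]_n -> Prop) (w : 'M[F]_n) : Prop :=
  W w /\ forall X, S X -> S (w *m X).

Definition Phi_h (Phi : seq 'rV[F]_n) (A : 'cV[F]_n) : seq 'rV[F]_n :=
  [seq a <- Phi | ev a A == 0].

Definition Uset (Phi : seq 'rV[F]_n) (A : 'cV[F]_n) (X : 'cV[F]_n) : Prop :=
  forall a, a \in Phi_h Phi A -> ev a X = 0.

Definition Bset (Phi : seq 'rV[F]_n) (A : 'cV[F]_n) (X : 'cV[F]_n) : Prop :=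
  Uset Phi A X /\ forall a, a \in Phi -> a \notin Phi_h Phi A -> ev a X != 0.

End Defs.

(* The Weyl group acts on roots by a |-> a w, and w(U) ⊆ U exactly when this
   action maps Phi_h into itself, which already follows from w A ∈ U. As w is
   invertible and Phi_h is finite, such a w permutes Phi_h, hence keeps the
   other roots outside Phi_h and preserves B. So Stab(U), Stab(B) and
   {w : w A ∈ B} all coincide with the stabiliser of Phi_h. *)
From mathcomp Require Import all_boot all_order all_algebra.
Import GRing.Theory.
Set Implicit Arguments.
Local Open Scope ring_scope.

Lemma mem_stable_preim (T : eqType) (f : T -> T) (s : seq T) :
  injective f -> {in s, forall y, f y \in s} -> forall x, f x \in s -> x \in s.
Proof.
move=> inj_f f_s x; rewrite -mem_undup -[x \in s]mem_undup.
have sub_s : {subset map f (undup s) <= undup s}.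
  by move=> _ /mapP[y Hy ->]; rewrite mem_undup f_s // -mem_undup.
have uniq_fs : uniq (map f (undup s)) by rewrite map_inj_uniq ?undup_uniq.
have [_ <-] := uniq_min_size uniq_fs sub_s (eq_leq (esym (size_map _ _))).
by rewrite mem_map.
Qed.

Section Weyl.
Variables (F : numClosedFieldType) (n : nat).
Variables (Phi : seq 'rV[F]_n) (cor : 'rV[F]_n -> 'cV[F]_n).
Hypothesis HPhi : is_root_datum Phi cor.
Implicit Types (a b : 'rV[F]_n) (c X : 'cV[F]_n) (w : 'M[F]_n).

Lemma evM a w X : ev a (w *m X) = ev (a *m w) X.
Proof. by rewrite /ev mulmxA. Qed.

Lemma mulmx_refl b a c : b *m refl a c = b - ev b c *: a.
Proof.
by rewrite /refl mulmxBr mulmx1 mulmxA [b *m c]mx11_scalar mul_scalar_mx.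
Qed.

Lemma refl_unitmx a c : ev a c = 2 -> refl a c \in unitmx.
Proof.
move=> eac; suff /mulmx1_unit[] : refl a c *m refl a c = 1%:M by [].
have ca2 : c *m a *m (c *m a) = c *m a *+ 2.
  rewrite mulmxA -(mulmxA c) [a *m c]mx11_scalar -/(ev a c) eac mul_mx_scalar.
  by rewrite -scalemxAl scaler_nat.
rewrite /refl mulmxBl mul1mx mulmxBr mulmx1 ca2 mulr2n.
by rewrite opprB addrK subrK.
Qed.

Lemma weyl_unitmx w : weyl Phi cor w -> w \in unitmx.
Proof.
have [cor2 _ _] := HPhi; case=> s [+ ->]; elim: s => [|a s IHs] /=.
  by rewrite unitmx1.
by case/andP=> Ha Hs; rewrite unitmx_mul refl_unitmx ?cor2 ?IHs.
Qed.

Lemma weyl_mulmx_root w b : weyl Phi cor w -> b \in Phi -> b *m w \in Phi.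
Proof.
have [_ Phi_refl _] := HPhi; case=> s [+ ->]; elim: s b => [|a s IHs] b /=.
  by rewrite mulmx1.
by case/andP=> Ha Hs Hb; rewrite mulmxA mulmx_refl IHs ?Phi_refl.
Qed.

Variable A : 'cV[F]_n.

Lemma mem_Phi_h a : (a \in Phi_h Phi A) = (ev a A == 0) && (a \in Phi).
Proof. exact: mem_filter. Qed.

Lemma Bset_A : Bset Phi A A.
Proof.
split=> [a | a Ha]; first by rewrite mem_Phi_h => /andP[/eqP].
by rewrite mem_Phi_h Ha andbT.
Qed.

Definition Phi_h_stable w := {in Phi_h Phi A, forall a, a *m w \in Phi_h Phi A}.

Lemma Phi_h_stable_Uset w :
  weyl Phi cor w -> Uset Phi A (w *m A) -> Phi_h_stable w.
Proof.
move=> Ww UwA a Ha; rewrite mem_Phi_h -evM UwA // eqxx weyl_mulmx_root //.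
by move: Ha; rewrite mem_Phi_h => /andP[].
Qed.

Lemma Uset_Phi_h_stable w X :
  Phi_h_stable w -> Uset Phi A X -> Uset Phi A (w *m X).
Proof. by move=> Sw UX a Ha; rewrite evM UX ?Sw. Qed.

Lemma Bset_Phi_h_stable w X :
  weyl Phi cor w -> Phi_h_stable w -> Bset Phi A X -> Bset Phi A (w *m X).
Proof.
move=> Ww Sw [UX BX]; split=> [|a Ha Hah]; first exact: Uset_Phi_h_stable.
rewrite evM BX ?weyl_mulmx_root //; apply: contra Hah.
exact: (mem_stable_preim (can_inj (mulmxK (weyl_unitmx Ww))) Sw).
Qed.

Lemma stab_Uset w :
  weyl Phi cor w -> stab (weyl Phi cor) (Uset Phi A) w <-> Phi_h_stable w.
Proof.
move=> Ww; split=> [[_ SU] | Sw].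
  exact/Phi_h_stable_Uset/SU/(proj1 Bset_A).
by split=> // X; apply: Uset_Phi_h_stable.
Qed.

Lemma stab_Bset w :
  weyl Phi cor w -> stab (weyl Phi cor) (Bset Phi A) w <-> Phi_h_stable w.
Proof.
move=> Ww; split=> [[_ SB] | Sw].
  exact/Phi_h_stable_Uset/(proj1 (SB _ Bset_A)).
by split=> // X; apply: Bset_Phi_h_stable.
Qed.

End Weyl.

Theorem lemma2p1 (F : numClosedFieldType) (n : nat)
  (Phi : seq 'rV[F]_n) (cor : 'rV[F]_n -> 'cV[F]_n)
  (HPhi : is_root_datum Phi cor) (A : 'cV[F]_n) :
  let W := weyl Phi cor in
  let U := Uset Phi A in
  let B := Bset Phi A in
  (forall w, stab W U w <-> stab W B w) /\
  (forall Y, ((exists w, W w /\ Y = w *m A) /\ B Y) <->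
             (exists w, stab W B w /\ Y = w *m A)).
Proof.
move=> W U B; split=> [w | Y]; split.
- move=> Sw; have [Ww _] := Sw.
  by apply/(stab_Bset HPhi _ Ww)/(stab_Uset HPhi _ Ww).
- move=> Sw; have [Ww _] := Sw.
  by apply/(stab_Uset HPhi _ Ww)/(stab_Bset HPhi _ Ww).
- case=> -[w [Ww ->]] [UwA _]; exists w; split=> //.
  exact/(stab_Bset HPhi _ Ww)/(Phi_h_stable_Uset HPhi Ww).
- by case=> w [[Ww SB] ->]; split; [exists w | apply/SB/Bset_A].
Qed.
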